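(* Let $n\ge1$. The Zariski closure of the boundary of the cone of $n\times n$ real symmetric copositive matrices (equivalently, of $\partial\mathcal C_{n,2}$ via $f(x)=x^TAx$) is the hypersurface $$\Big\{A=A^T:\ \prod_{\emptyset\ne I\subseteq[n]}\det A(I,I)=0\Big\}.$$
   Context: A real symmetric $n\times n$ matrix $A$ is copositive if $x^TAx\ge0$ for all $x\in\mathbb R^n_+$; $\mathcal C_{n,2}$ denotes the cone of copositive quadratic forms. $A(I,I)$ is the principal submatrix of $A$ with row and column indices in $I\subseteq[n]=\{1,\dots,n\}$. The Zariski closure of a set of symmetric matrices is the smallest complex algebraic variety in the space of complex symmetric matrices containing it. *)

From HB Require Import structures.
From mathcomp Require Import all_boot all_order all_algebra.
Set Implicit Arguments. Unset Strict Implicit. Unset Printing Implicit Defensive.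
Import Order.TTheory GRing.Theory Num.Theory.
Local Open Scope ring_scope.

Inductive mpoly (C : Type) (n : nat) : Type :=
| MConst : C -> mpoly C n
| MVar : 'I_n -> 'I_n -> mpoly C n
| MAdd : mpoly C n -> mpoly C n -> mpoly C n
| MMul : mpoly C n -> mpoly C n -> mpoly C n.

Fixpoint meval (C : nzRingType) (n : nat) (p : mpoly C n) (A : 'M[C]_n) : C :=
  match p with
  | MConst c => c
  | MVar i j => A i j
  | MAdd p q => meval p A + meval q A
  | MMul p q => meval p A * meval q A
  end.

Definition zariski_closure (C : nzRingType) (n : nat) (S : 'M[C]_n -> Prop)
  (A : 'M[C]_n) : Prop :=
  A^T = A /\ forall p : mpoly C n, (forall B, S B -> meval p B = 0) -> meval p A = 0.

Definition real_sym (C : numClosedFieldType) (n : nat) (A : 'M[C]_n) : Prop :=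
  A^T = A /\ forall i j, A i j \is Num.real.

Definition copositive (C : numClosedFieldType) (n : nat) (A : 'M[C]_n) : Prop :=
  forall x : 'cV[C]_n, (forall i, 0 <= x i 0) -> 0 <= (x^T *m A *m x) 0 0.

Definition in_closure (C : numClosedFieldType) (n : nat) (P : 'M[C]_n -> Prop)
  (A : 'M[C]_n) : Prop :=
  forall e : C, 0 < e -> exists B, real_sym B /\ P B /\ forall i j, `|B i j - A i j| < e.

Definition copos_boundary (C : numClosedFieldType) (n : nat) (A : 'M[C]_n) : Prop :=
  real_sym A /\ in_closure (@copositive C n) A
  /\ in_closure (fun B => ~ copositive B) A.

(* Principal submatrix A(I,I) (indices of I in increasing order). *)
Definition principal (R : Type) (n : nat) (I : {set 'I_n}) (A : 'M[R]_n)
  : 'M[R]_#|I| :=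
  \matrix_(i < #|I|, j < #|I|) A (enum_val i) (enum_val j).

From HB Require Import structures.
From mathcomp Require Import all_boot all_order all_algebra ring.
Set Implicit Arguments. Unset Strict Implicit. Unset Printing Implicit Defensive.
Import Order.TTheory GRing.Theory Num.Theory.
Local Open Scope ring_scope.

(* A matrix B on the boundary is a limit of copositive matrices, hence
   copositive.  If no principal minor of B vanished, induction on the support
   would give d > 0 with x^T B x >= d (sum x)^2 for all x >= 0: on a face S the
   solution u of B(S,S) u = 1 makes x^T B x split along the hyperplane
   sum x = 1, and a ratio-test step moves any point of smaller value to a
   smaller face.  Every matrix near B would then be copositive, so B would be
   interior.  Hence the product of the principal minors, a polynomial,
   vanishes on the boundary.

   Conversely fix I and i0 in I.  The matrices that agree with a symmetric Q
   off the block I x I and equal K^T Q K on it, where K = 1 - v e_i0^T with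
   v_i0 = 1, form a polynomial family in (Q, v).  When Q is diagonally dominant
   with nonnegative entries and v >= 0, such a matrix M is copositive with
   v^T M v = 0, hence on the boundary; these parameters contain a product of
   infinite sets, so a polynomial vanishing on the boundary vanishes on the
   whole family.  A symmetric A with det A(I,I) = 0 is the member with Q = A
   and v a kernel vector of A(I,I) normalised at i0. *)

Section GridIdentity.
Variables (T : finType) (R : idomainType).

Definition upd (x : {ffun T -> R}) (a : T) (t : R) : {ffun T -> R} :=
  [ffun b => if b == a then t else x b].

Lemma updK x a : upd x a (x a) = x.
Proof. by apply/ffunP => b; rewrite ffunE; case: eqP => [->|]. Qed.

Lemma eq0_on_grid (F : {ffun T -> R} -> R) (f : T -> nat -> R) :
  (forall a, injective (f a)) ->
  (forall (x : {ffun T -> R}) a, exists q : {poly R}, forall t, F (upd x a t) = q.[t]) ->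
  (forall x : {ffun T -> R}, (forall a, exists k, x a = f a k) -> F x = 0) ->
  forall x, F x = 0.
Proof.
move=> f_inj F_poly F_grid.
suff F0 (s : seq T) (x : {ffun T -> R}) :
    (forall a, a \notin s -> exists k, x a = f a k) -> F x = 0.
  by move=> x; apply: (F0 (enum T)) => a; rewrite mem_enum.
elim: s x => [|a s IH] x x_grid; first by apply: F_grid => b; apply: x_grid.
have [q qE] := F_poly x a.
suff q0 : q = 0 by rewrite -(updK x a) qE q0 horner0.
apply/eqP; apply: contraT => q_neq0.
have q_roots : all (root q) [seq f a k | k <- iota 0 (size q)].
  apply/allP => _ /mapP[k _ ->]; rewrite /root -qE; apply/eqP/IH => b bs.
  rewrite ffunE; case: eqP => [->|/eqP ba]; first by exists k.
  by apply: x_grid; rewrite inE negb_or ba.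
have roots_uniq : uniq [seq f a k | k <- iota 0 (size q)].
  by rewrite map_inj_uniq ?iota_uniq.
have := max_poly_roots q_neq0 q_roots roots_uniq.
by rewrite size_map size_iota ltnn.
Qed.
End GridIdentity.

Section PolyCoefficients.
Variables (R : comNzRingType) (n : nat).

Fixpoint mpoly_polyC (p : mpoly R n) : mpoly {poly R} n :=
  match p with
  | MConst c => MConst n c%:P
  | MVar i j => MVar {poly R} i j
  | MAdd p q => MAdd (mpoly_polyC p) (mpoly_polyC q)
  | MMul p q => MMul (mpoly_polyC p) (mpoly_polyC q)
  end.

Lemma horner_meval (p : mpoly R n) (M : 'M[{poly R}]_n) t :
  (meval (mpoly_polyC p) M).[t] = meval p (map_mx (horner_eval t) M).
Proof.
elim: p => [c|i j|p IHp q IHq|p IHp q IHq] /=.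
- by rewrite hornerC.
- by rewrite mxE.
- by rewrite hornerD IHp IHq.
- by rewrite hornerM IHp IHq.
Qed.
End PolyCoefficients.

Section CopositiveBoundary.
Variable C : numClosedFieldType.

Lemma realmx_trmx m p (M : 'M[C]_(m, p)) : M \is a realmx -> M^T \is a realmx.
Proof. by move=> /mxOverP MR; apply/mxOverP => i j; rewrite mxE. Qed.

Lemma realmxB m p (M N : 'M[C]_(m, p)) :
  M \is a realmx -> N \is a realmx -> M - N \is a realmx.
Proof. by move=> /mxOverP MR /mxOverP NR; apply/mxOverP => i j; rewrite !mxE rpredB. Qed.

Lemma realmx_det m (M : 'M[C]_m) : M \is a realmx -> \det M \is Num.real.
Proof.
move=> /mxOverP MR; apply: rpred_sum => s _.
by rewrite rpredM ?rpredX ?rpredN ?rpred1 //; apply: rpred_prod.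
Qed.

Lemma realmx_invmx m (M : 'M[C]_m) : M \is a realmx -> invmx M \is a realmx.
Proof.
move=> MR; rewrite /invmx; case: ifP => _ //; apply/mxOverP => i j.
rewrite mxE rpredM ?rpredV ?realmx_det // mxE rpredM ?rpredX ?rpredN ?rpred1 //.
by apply: realmx_det; apply/mxOverP => a b; rewrite !mxE (mxOverP MR).
Qed.

Lemma pos_bound_uniform (T : finType) (Q : T -> C -> Prop) :
  (forall t d e, e <= d -> Q t d -> Q t e) ->
  (forall t, exists2 d, 0 < d & Q t d) -> exists2 d, 0 < d & forall t, Q t d.
Proof.
move=> Qmono Qex.
suff [d d_gt0 Qd] : exists2 d, 0 < d & forall t, t \in enum T -> Q t d.
  by exists d => // t; apply: Qd; rewrite mem_enum.
elim: (enum T) => [|t s [d2 d2_gt0 Q2]]; first by exists 1.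
have [d1 d1_gt0 Q1] := Qex t.
case/orP: (real_leVge (gtr0_real d1_gt0) (gtr0_real d2_gt0)) => [le12|le21].
- exists d1 => // t'; rewrite inE => /predU1P[->//|t's].
  exact: Qmono le12 (Q2 t' t's).
- exists d2 => // t'; rewrite inE => /predU1P[->|]; last exact: Q2.
  exact: Qmono le21 Q1.
Qed.

Section QuadraticForm.
Variable n : nat.
Implicit Types (B : 'M[C]_n) (x y : 'I_n -> C).

Definition bform B x y := \sum_i \sum_j x i * B i j * y j.
Definition qform B x := bform B x x.
Definition vsum x := \sum_i x i.
Definition nonneg x := forall i, 0 <= x i.
Definition realv x := forall i, x i \is Num.real.

Lemma eq_qform B x y : x =1 y -> qform B x = qform B y.
Proof.
move=> exy; apply: eq_bigr => i _; apply: eq_bigr => j _.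
by rewrite !exy.
Qed.

Lemma qform_colE B (x : 'cV[C]_n) : (x^T *m B *m x) 0 0 = qform B (fun i => x i 0).
Proof.
rewrite mxE /qform /bform; under eq_bigr do rewrite mxE big_distrl /=.
rewrite exchange_big; apply: eq_bigr => i _; apply: eq_bigr => j _.
by rewrite !mxE.
Qed.

Lemma qform_mxE B x : ((\col_i x i)^T *m B *m \col_i x i) 0 0 = qform B x.
Proof. by rewrite qform_colE; apply: eq_qform => i; rewrite mxE. Qed.

Lemma bform_linl B a b c y :
  bform B (fun i => a i + c * b i) y = bform B a y + c * bform B b y.
Proof.
rewrite /bform mulr_sumr -big_split; apply: eq_bigr => i _.
by rewrite mulr_sumr -big_split; apply: eq_bigr => j _ /=; ring.
Qed.

Lemma bform_linr B a b c y :
  bform B y (fun i => a i + c * b i) = bform B y a + c * bform B y b.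
Proof.
rewrite /bform mulr_sumr -big_split; apply: eq_bigr => i _.
by rewrite mulr_sumr -big_split; apply: eq_bigr => j _ /=; ring.
Qed.

Lemma bformZl B c x y : bform B (fun i => c * x i) y = c * bform B x y.
Proof.
rewrite /bform mulr_sumr; apply: eq_bigr => i _.
by rewrite mulr_sumr; apply: eq_bigr => j _; ring.
Qed.

Lemma sym_entry B : B^T = B -> forall i j, B j i = B i j.
Proof. by move=> Bsym i j; rewrite -{1}Bsym mxE. Qed.

Lemma bformC B x y : B^T = B -> bform B x y = bform B y x.
Proof.
move=> Bsym; rewrite /bform exchange_big; apply: eq_bigr => i _.
by apply: eq_bigr => j _; rewrite (sym_entry Bsym); ring.
Qed.

Lemma qform_lin B a b c : B^T = B ->
  qform B (fun i => a i + c * b i) = qform B a + 2 * c * bform B a b + c ^+ 2 * qform B b.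
Proof.
by move=> Bsym; rewrite /qform bform_linl !bform_linr (bformC b a Bsym); ring.
Qed.

Lemma qformZ B c x : qform B (fun i => c * x i) = c ^+ 2 * qform B x.
Proof.
rewrite /qform /bform mulr_sumr; apply: eq_bigr => i _.
by rewrite mulr_sumr; apply: eq_bigr => j _; ring.
Qed.

Lemma bform_real B x y : B \is a realmx -> realv x -> realv y -> bform B x y \is Num.real.
Proof.
move=> /mxOverP BR xR yR; apply: rpred_sum => i _; apply: rpred_sum => j _.
by rewrite !rpredM.
Qed.

Lemma vsum_lin a b c : vsum (fun i => a i + c * b i) = vsum a + c * vsum b.
Proof. by rewrite /vsum big_split mulr_sumr. Qed.

Lemma vsumZ c x : vsum (fun i => c * x i) = c * vsum x.
Proof. by rewrite /vsum mulr_sumr. Qed.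

Lemma vsum_ge0 x : nonneg x -> 0 <= vsum x.
Proof. by move=> x_ge0; apply: sumr_ge0. Qed.

Lemma vsum_eq0 x : nonneg x -> vsum x = 0 -> forall i, x i = 0.
Proof. by move=> x_ge0 x0 i; apply: (psumr_eq0P (P := predT)). Qed.

Lemma qform_eq0 B x : (forall i, x i = 0) -> qform B x = 0.
Proof.
by move=> x0; rewrite /qform /bform big1 // => i _; rewrite big1 // => j _; rewrite x0 !mul0r.
Qed.

Lemma qform_perturb B B' e x : B \is a realmx -> B' \is a realmx -> nonneg x ->
  (forall i j, `|B' i j - B i j| < e) ->
  qform B x - e * vsum x ^+ 2 <= qform B' x <= qform B x + e * vsum x ^+ 2.
Proof.
move=> /mxOverP BR /mxOverP B'R x_ge0 close.
have entry i j : - (e * (x i * x j)) <= (B' i j - B i j) * (x i * x j) <= e * (x i * x j).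
  have /andP[lo hi] : - e <= B' i j - B i j <= e.
    by rewrite -real_ler_norml ?rpredB ?BR ?B'R // ltW.
  have xx_ge0 : 0 <= x i * x j by rewrite mulr_ge0.
  by rewrite -mulNr !ler_wpM2r.
have -> : qform B' x = qform B x + \sum_i \sum_j (B' i j - B i j) * (x i * x j).
  rewrite /qform /bform -big_split; apply: eq_bigr => i _; rewrite -big_split.
  by apply: eq_bigr => j _ /=; ring.
have sqE : vsum x ^+ 2 = \sum_i \sum_j x i * x j.
  by rewrite expr2 /vsum mulr_suml; apply: eq_bigr => i _; rewrite mulr_sumr.
rewrite sqE mulr_sumr; apply/andP; split.
- rewrite lerD2l -sumrN; apply: ler_sum => i _; rewrite mulr_sumr -sumrN.
  by apply: ler_sum => j _; case/andP: (entry i j).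
- rewrite lerD2l; apply: ler_sum => i _; rewrite mulr_sumr.
  by apply: ler_sum => j _; case/andP: (entry i j).
Qed.

(* Off the diagonal 2 w_l Q_lm w_m >= -(w_l^2 + w_m^2); summed over all pairs
   this loss is paid for by the diagonal terms, each at least 2 n w_l^2. *)
Lemma qform_ge0_dominant (Q : 'M[C]_n) w :
  (forall l, n%:R <= Q l l) -> (forall l m, 0 <= Q l m) ->
  (forall l m, l != m -> Q l m <= 1) -> realv w -> 0 <= qform Q w.
Proof.
move=> Qdiag Q_ge0 Qoff wR.
have sq_ge0 l : 0 <= w l ^+ 2 by rewrite -realEsqr.
pose D l m := (l == m)%:R * (2 * n%:R * w l ^+ 2) - (w l ^+ 2 + w m ^+ 2).
have D_le l m : D l m <= 2 * (w l * Q l m * w m).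
  rewrite /D; have [<-|lm] := eqVneq l m.
  - rewrite mul1r; apply: (@le_trans _ _ (2 * n%:R * w l ^+ 2)).
      by rewrite gerBl addr_ge0.
    have -> : 2 * (w l * Q l l * w l) = 2 * Q l l * w l ^+ 2 by ring.
    by rewrite ler_wpM2r // ler_wpM2l.
  - rewrite mul0r sub0r -subr_ge0 opprK.
    have -> : 2 * (w l * Q l m * w m) + (w l ^+ 2 + w m ^+ 2)
        = Q l m * (w l + w m) ^+ 2 + (1 - Q l m) * (w l ^+ 2 + w m ^+ 2) by ring.
    have wR2 : 0 <= (w l + w m) ^+ 2 by rewrite -realEsqr rpredD.
    apply: addr_ge0; first by rewrite mulr_ge0.
    by rewrite mulr_ge0 ?subr_ge0 ?Qoff ?addr_ge0.
have Ddiag l : \sum_m (l == m)%:R * (2 * n%:R * w l ^+ 2) = 2 * n%:R * w l ^+ 2.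
  rewrite (bigD1 l) //= eqxx mul1r big1 ?addr0 // => m ml.
  by rewrite eq_sym (negbTE ml) mul0r.
have D0 : \sum_l \sum_m D l m = 0.
  rewrite /D; under eq_bigr do rewrite sumrB Ddiag big_split /= sumr_const card_ord.
  rewrite sumrB big_split /= sumr_const card_ord -mulr_sumr sumrMnl.
  by rewrite -mulr_natr; ring.
have : \sum_l \sum_m D l m <= 2 * qform Q w.
  rewrite /qform /bform mulr_sumr; apply: ler_sum => l _.
  by rewrite mulr_sumr; apply: ler_sum => m _.
by rewrite D0 pmulr_rge0.
Qed.

Lemma qform_congruence (K Q : 'M[C]_n) z :
  qform (K^T *m Q *m K) z = qform Q (fun a => (K *m \col_l z l) a 0).
Proof. by rewrite -qform_mxE -qform_colE trmx_mul !mulmxA. Qed.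

Lemma qform_subI B c y :
  qform (B - c%:M) y = qform B y - c * \sum_l y l ^+ 2.
Proof.
rewrite /qform /bform mulr_sumr -sumrB; apply: eq_bigr => i _.
rewrite (bigD1 i) // [in RHS](bigD1 i) //= !mxE eqxx mulr1n.
have -> : \sum_(j | j != i) y i * (B - c%:M) i j * y j = \sum_(j | j != i) y i * B i j * y j.
  by apply: eq_bigr => j ji; rewrite !mxE eq_sym (negbTE ji) mulr0n subr0.
by ring.
Qed.

Lemma exists_neg_entry B z : realv z -> vsum z = 0 -> qform B z < 0 ->
  exists i, z i < 0.
Proof.
move=> zR z0 qz_lt0; case: (pickP (fun i => z i < 0)) => [i zi|z_ge0]; first by exists i.
have zn : nonneg z by move=> i; rewrite real_leNgt ?real0 ?zR // z_ge0.
by rewrite qform_eq0 ?ltxx in qz_lt0 => //; exact: vsum_eq0 zn z0.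
Qed.

Lemma ratio_test x w : nonneg x -> realv w -> (exists i, 0 < w i) ->
  exists t, exists2 i0, 0 < w i0 &
    [/\ 0 <= t, nonneg (fun i => x i - t * w i) & x i0 - t * w i0 = 0].
Proof.
move=> x_ge0 wR [i1 wi1].
have ratioR i : 0 < w i -> x i / w i \is Num.real.
  by move=> wi; rewrite rpredM ?rpredV ?ger0_real // ltW.
case: (@real_arg_minP _ _ _ (fun i => 0 < w i) (fun i => x i / w i) wi1 ratioR)
  => i0 wi0 i0min.
exists (x i0 / w i0); exists i0 => //; split.
- by rewrite divr_ge0 // ltW.
- move=> i; rewrite subr_ge0; case: (real_leP (wR i) (real0 C)) => wi.
  + by apply: le_trans (x_ge0 i); rewrite mulr_ge0_le0 // divr_ge0 // ltW.
  + by rewrite -ler_pdivlMr // i0min.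
- by rewrite divfK ?subrr // gt_eqF.
Qed.
End QuadraticForm.

Section LiftVector.
Variables (n : nat) (S : {set 'I_n}).

Definition lift_vec (w : 'I_#|S| -> C) : 'I_n -> C :=
  fun l => \sum_k (enum_val k == l)%:R * w k.

Lemma lift_vec_out w l : l \notin S -> lift_vec w l = 0.
Proof.
move=> lS; rewrite /lift_vec big1 // => k _.
by case: eqP => [ek|]; [move: (enum_valP k); rewrite ek (negbTE lS) | rewrite mul0r].
Qed.

Lemma lift_vec_val w k : lift_vec w (enum_val k) = w k.
Proof.
rewrite /lift_vec (bigD1 k) //= eqxx mul1r big1 ?addr0 // => m mk.
by rewrite (inj_eq enum_val_inj) (negbTE mk) mul0r.
Qed.

Lemma lift_vec_real w : (forall k, w k \is Num.real) -> realv (lift_vec w).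
Proof. by move=> wR l; apply: rpred_sum => k _; rewrite rpredM ?rpred_nat. Qed.

Lemma lift_vec_sum (F : 'I_n -> C) w :
  \sum_l F l * lift_vec w l = \sum_k F (enum_val k) * w k.
Proof.
rewrite /lift_vec; under eq_bigr do rewrite mulr_sumr.
rewrite exchange_big; apply: eq_bigr => k _.
rewrite (bigD1 (enum_val k)) //= eqxx mul1r big1 ?addr0 // => l lk.
by rewrite eq_sym (negbTE lk) mul0r mulr0.
Qed.

Lemma principal_mul_lift (B : 'M[C]_n) w j (jS : j \in S) :
  \sum_l B j l * lift_vec w l = \sum_k principal S B (enum_rank_in jS j) k * w k.
Proof. by rewrite lift_vec_sum; apply: eq_bigr => k _; rewrite mxE enum_rankK_in. Qed.
End LiftVector.

Section UniformCopositivity.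
Variables (n : nat) (B : 'M[C]_n).
Hypotheses (B_real : B \is a realmx) (B_sym : B^T = B).
Hypothesis B_copos : forall x, nonneg x -> 0 <= qform B x.
Hypothesis B_minors : forall S : {set 'I_n}, S != set0 -> \det (principal S B) != 0.

Definition supp (S : {set 'I_n}) (x : 'I_n -> C) := forall i, i \notin S -> x i = 0.

Definition bounded_on S d :=
  forall x, nonneg x -> supp S x -> d * vsum x ^+ 2 <= qform B x.

Lemma supp_mem S x i : supp S x -> x i != 0 -> i \in S.
Proof. by move=> xS; apply: contraR => /xS ->; rewrite eqxx. Qed.

Lemma supp_setD1 S x i : supp S x -> x i = 0 -> supp (S :\ i) x.
Proof. by move=> xS xi j; rewrite in_setD1 negb_and negbK => /orP[/eqP->|/xS]. Qed.

Lemma bounded_on_le S d e : e <= d -> bounded_on S d -> bounded_on S e.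
Proof.
move=> ed Bd x x_ge0 xS; apply: le_trans (Bd x x_ge0 xS).
by rewrite ler_wpM2r ?exprn_ge0 ?vsum_ge0.
Qed.

Lemma bounded_on_normalized S d :
  (forall x, nonneg x -> supp S x -> vsum x = 1 -> d <= qform B x) -> bounded_on S d.
Proof.
move=> Bd x x_ge0 xS.
have [x0|xn0] := eqVneq (vsum x) 0.
  by rewrite x0 qform_eq0 ?expr0n ?mulr0 //; exact: vsum_eq0.
have s_gt0 : 0 < vsum x by rewrite lt_def xn0 vsum_ge0.
pose y i := (vsum x)^-1 * x i.
have y_ge0 : nonneg y by move=> i; rewrite mulr_ge0 // invr_ge0 ltW.
have yS : supp S y by move=> i iS; rewrite /y xS // mulr0.
have y1 : vsum y = 1 by rewrite vsumZ mulVf.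
have := Bd y y_ge0 yS y1.
rewrite qformZ -(ler_pM2r (exprn_gt0 2 s_gt0)) => /le_trans; apply.
by rewrite mulrAC -exprMn mulVf // expr1n mul1r.
Qed.

Lemma principal_sum_solution S : S != set0 ->
  exists u, [/\ realv u, supp S u, forall y, supp S y -> bform B u y = vsum y
              & exists i, u i != 0].
Proof.
move=> S0.
set M := principal S B.
have M_unit : M \in unitmx by rewrite unitmxE unitfE B_minors.
set w : 'cV_#|S| := invmx M *m const_mx 1.
have Mw : M *m w = const_mx 1 by rewrite mulKVmx.
set u := lift_vec (fun k => w k 0).
have Bu1 j : j \in S -> \sum_l B j l * u l = 1.
  move=> jS; rewrite principal_mul_lift.
  move/(congr1 (fun v : 'cV[C]_#|S| => v (enum_rank_in jS j) 0)): Mw.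
  by rewrite mxE => ->; rewrite mxE.
exists u; split.
- have MR : M \is a realmx by apply/mxOverP => i j; rewrite mxE (mxOverP B_real).
  apply: lift_vec_real => k; rewrite mxE; apply: rpred_sum => l _.
  by rewrite mxE rpredM ?rpred1 ?(mxOverP (realmx_invmx MR)).
- by move=> i; apply: lift_vec_out.
- move=> y yS; rewrite /bform exchange_big; apply: eq_bigr => j _.
  have [jS|jS] := boolP (j \in S); last by rewrite yS // big1 // => i _; rewrite mulr0.
  transitivity ((\sum_l B j l * u l) * y j); last by rewrite Bu1 // mul1r.
  by rewrite mulr_suml; apply: eq_bigr => i _; rewrite (sym_entry B_sym); ring.
- case/set0Pn: S0 => j jS.
  case: (pickP (fun i => u i != 0)) => [i ui|u0]; first by exists i.
  move: (Bu1 j jS); rewrite big1 => [/eqP|l _]; first by rewrite eq_sym oner_eq0.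
  by move/negbFE/eqP: (u0 l) => ->; rewrite mulr0.
Qed.

Section Step.
Variables (S : {set 'I_n}) (u : 'I_n -> C) (d' : C).
Hypotheses (u_real : realv u) (u_supp : supp S u).
Hypothesis u_bform : forall y, supp S y -> bform B u y = vsum y.
Hypothesis d'_gt0 : 0 < d'.
Hypothesis bounded_minus : forall j, j \in S -> bounded_on (S :\ j) d'.

Lemma bound_at_face p i : i \in S -> nonneg p -> supp S p -> p i = 0 ->
  1 <= vsum p -> d' <= qform B p.
Proof.
move=> iS p_ge0 pS pi p1.
apply: le_trans (bounded_minus iS p_ge0 (supp_setD1 pS pi)).
by rewrite ler_peMr ?(ltW d'_gt0) // exprn_ege1.
Qed.

(* With c = u / vsum u, every x of sum 1 is c + z with bform c z = 0 and
   qform c = (vsum u)^-1.  If qform z < 0, moving from x along z until a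
   coordinate vanishes reaches a face S :\ i0 with an even smaller form. *)
Lemma bounded_on_step_pos d : 0 < vsum u -> d <= d' -> d <= (vsum u)^-1 ->
  bounded_on S d.
Proof.
move=> s_gt0 dd' ds; apply: bounded_on_normalized => x x_ge0 xS x1.
set s := vsum u in s_gt0 ds.
pose c i := s^-1 * u i.
pose z i := x i - c i.
have cS : supp S c by move=> i iS; rewrite /c u_supp // mulr0.
have zS : supp S z by move=> i iS; rewrite /z cS // xS // subrr.
have zR i : z i \is Num.real.
  by rewrite rpredB ?rpredM ?rpredV ?(ger0_real (x_ge0 i)) ?(gtr0_real s_gt0) ?u_real.
have c1 : vsum c = 1 by rewrite vsumZ mulVf // gt_eqF.
have z0 : vsum z = 0 by move: x1 c1; rewrite /vsum sumrB => -> ->; rewrite subrr.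
have qlin t : qform B (fun i => c i + t * z i) = s^-1 + t ^+ 2 * qform B z.
  rewrite qform_lin // bformZl u_bform // z0 mulr0 mulr0 addr0.
  by rewrite /qform bformZl u_bform // c1 mulr1.
have qx : qform B x = s^-1 + qform B z.
  transitivity (qform B (fun i => c i + 1 * z i)); last by rewrite qlin expr1n mul1r.
  by apply: eq_qform => i; rewrite /z; ring.
have qzR : qform B z \is Num.real := bform_real B_real zR zR.
have [qz_ge0|qz_lt0] := real_leP (real0 C) qzR.
  by rewrite qx; apply: le_trans ds _; rewrite lerDl.
have [i zi] := exists_neg_entry zR z0 qz_lt0.
have wR : realv (fun j => - z j) by move=> j; rewrite rpredN zR.
have w_pos : exists j, 0 < - z j by exists i; rewrite oppr_gt0.
have [t [i0 wi0 [t_ge0 p_ge0 pi0]]] := ratio_test x_ge0 wR w_pos.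
pose p i := c i + (1 + t) * z i.
have pE j : p j = x j - t * - z j by rewrite /p /z; ring.
have i0S : i0 \in S by apply: (supp_mem zS); rewrite -oppr_eq0 lt0r_neq0.
apply: le_trans dd' _; apply: (@le_trans _ _ (qform B p)).
  apply: (bound_at_face i0S).
  - by move=> j; rewrite pE.
  - by move=> j jS; rewrite /p cS // zS // mulr0 addr0.
  - by rewrite pE.
  - by rewrite vsum_lin c1 z0 mulr0 addr0.
have t1 : 1 <= 1 + t by rewrite lerDl.
rewrite qlin qx lerD2l.
by have := ler_wnM2r (ltW qz_lt0) (exprn_ege1 2 t1); rewrite mul1r.
Qed.

Lemma bounded_on_step_nonpos : (exists i, u i != 0) -> vsum u <= 0 -> bounded_on S d'.
Proof.
move=> [i1 ui1] s_le0; apply: bounded_on_normalized => x x_ge0 xS x1.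
have qu : qform B u = vsum u := u_bform u_supp.
have [i ui|u_le0] := pickP (fun i => 0 < u i); last first.
  (* -u would be a nonzero nonnegative vector with qform B (-u) = vsum u <= 0 *)
  have nu_ge0 : nonneg (fun i => -1 * u i).
    by move=> i; rewrite mulN1r oppr_ge0 real_leNgt ?u_real ?real0 // u_le0.
  have s0 : vsum u = 0.
    have := B_copos nu_ge0; rewrite qformZ sqrrN expr1n mul1r qu => s_ge0.
    by apply/eqP; rewrite eq_le s_le0 s_ge0.
  have nu0 : vsum (fun i => -1 * u i) = 0 by rewrite vsumZ s0 mulr0.
  by move/eqP: (vsum_eq0 nu_ge0 nu0 i1); rewrite mulN1r oppr_eq0 (negbTE ui1).
have [t [i0 ui0 [t_ge0 y_ge0 yi0]]] := ratio_test x_ge0 u_real (ex_intro _ i ui).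
pose y i := x i + - t * u i.
have yE j : y j = x j - t * u j by rewrite /y mulNr.
have i0S : i0 \in S by apply: (supp_mem u_supp); rewrite lt0r_neq0.
have qy : qform B y = qform B x - (2 * t - t ^+ 2 * vsum u).
  by rewrite qform_lin // (bformC x u B_sym) u_bform // x1 qu; ring.
apply: (@le_trans _ _ (qform B y)).
  apply: (bound_at_face i0S).
  - by move=> j; rewrite yE.
  - by move=> j jS; rewrite /y xS // u_supp // mulr0 addr0.
  - by rewrite yE.
  - by rewrite vsum_lin x1 mulNr lerDl oppr_ge0 mulr_ge0_le0.
by rewrite qy gerBl addr_ge0 ?mulr_ge0 // oppr_ge0 mulr_ge0_le0 ?exprn_ge0.
Qed.
End Step.

Lemma bounded_on_step S d' : S != set0 -> 0 < d' ->
  (forall j, j \in S -> bounded_on (S :\ j) d') -> exists2 d, 0 < d & bounded_on S d.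
Proof.
move=> S0 d'_gt0 IH.
have [u [uR uS ubf u_neq0]] := principal_sum_solution S0.
have sR : vsum u \is Num.real by apply: rpred_sum.
have [s_le0|s_gt0] := real_leP sR (real0 C).
  by exists d' => //; apply: bounded_on_step_nonpos.
have si_gt0 : 0 < (vsum u)^-1 by rewrite invr_gt0.
case/orP: (real_leVge (gtr0_real d'_gt0) (gtr0_real si_gt0)) => le.
- by exists d' => //; apply: (bounded_on_step_pos uR uS ubf d'_gt0 IH).
- by exists (vsum u)^-1 => //; apply: (bounded_on_step_pos uR uS ubf d'_gt0 IH).
Qed.

Lemma bounded_on_exists S : exists2 d, 0 < d & bounded_on S d.
Proof.
elim: {S}_.+1 {-2}S (ltnSn #|S|) => // k IH S; rewrite ltnS => Sk.
have [->|S0] := eqVneq S set0.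
  exists 1 => // x _ xS.
  have x0 i : x i = 0 by rewrite xS ?in_set0.
  by rewrite qform_eq0 // /vsum big1 // expr0n mulr0.
have [d' d'_gt0 Hd'] : exists2 d, 0 < d & forall j, j \in S -> bounded_on (S :\ j) d.
  apply: pos_bound_uniform => [j d e ed Bd jS|j].
    exact: bounded_on_le ed (Bd jS).
  have [jS|] := boolP (j \in S); last by exists 1.
  have [|d d_gt0 Bd] := IH (S :\ j); last by exists d.
  by move: Sk; rewrite (cardsD1 j S) jS.
exact: bounded_on_step S0 d'_gt0 Hd'.
Qed.

Lemma uniform_copositive :
  exists2 d, 0 < d & forall x, nonneg x -> d * vsum x ^+ 2 <= qform B x.
Proof.
have [d d_gt0 Bd] := bounded_on_exists setT.
by exists d => // x x_ge0; apply: Bd => // i; rewrite in_setT.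
Qed.
End UniformCopositivity.

Section PolynomialMap.
Variable n : nat.

Definition polynomial_map (f : 'M[C]_n -> C) :=
  exists p : mpoly C n, forall B, meval p B = f B.

Lemma eq_polynomial_map f g : f =1 g -> polynomial_map f -> polynomial_map g.
Proof. by move=> fg [p pf]; exists p => B; rewrite pf fg. Qed.

Lemma polynomial_map_const c : polynomial_map (fun _ => c).
Proof. by exists (MConst n c). Qed.

Lemma polynomial_map_entry i j : polynomial_map (fun B => B i j).
Proof. by exists (MVar C i j). Qed.

Lemma polynomial_mapD f g :
  polynomial_map f -> polynomial_map g -> polynomial_map (fun B => f B + g B).
Proof. by move=> [p pf] [q qg]; exists (MAdd p q) => B /=; rewrite pf qg. Qed.

Lemma polynomial_mapM f g :
  polynomial_map f -> polynomial_map g -> polynomial_map (fun B => f B * g B).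
Proof. by move=> [p pf] [q qg]; exists (MMul p q) => B /=; rewrite pf qg. Qed.

Lemma polynomial_map_sum (I : Type) (r : seq I) (P : pred I) (F : I -> 'M[C]_n -> C) :
  (forall i, polynomial_map (F i)) -> polynomial_map (fun B => \sum_(i <- r | P i) F i B).
Proof.
move=> FP; elim: r => [|a r IH].
  by apply: eq_polynomial_map (polynomial_map_const 0) => B; rewrite big_nil.
have [Pa|nPa] := boolP (P a).
  by apply: eq_polynomial_map (polynomial_mapD (FP a) IH) => B; rewrite big_cons Pa.
by apply: eq_polynomial_map IH => B; rewrite big_cons (negbTE nPa).
Qed.

Lemma polynomial_map_prod (I : Type) (r : seq I) (P : pred I) (F : I -> 'M[C]_n -> C) :
  (forall i, polynomial_map (F i)) -> polynomial_map (fun B => \prod_(i <- r | P i) F i B).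
Proof.
move=> FP; elim: r => [|a r IH].
  by apply: eq_polynomial_map (polynomial_map_const 1) => B; rewrite big_nil.
have [Pa|nPa] := boolP (P a).
  by apply: eq_polynomial_map (polynomial_mapM (FP a) IH) => B; rewrite big_cons Pa.
by apply: eq_polynomial_map IH => B; rewrite big_cons (negbTE nPa).
Qed.

Lemma polynomial_map_det k (g : 'I_k -> 'I_n) :
  polynomial_map (fun B => \det (\matrix_(i, j) B (g i) (g j))).
Proof.
rewrite /determinant; apply: polynomial_map_sum => s.
apply: polynomial_mapM; first exact: polynomial_map_const.
apply: polynomial_map_prod => i.
by apply: eq_polynomial_map (polynomial_map_entry (g i) _) => B; rewrite mxE.
Qed.

Lemma polynomial_map_minors :
  polynomial_map (fun B => \prod_(I : {set 'I_n} | I != set0) \det (principal I B)).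
Proof. by apply: polynomial_map_prod => I; apply: polynomial_map_det. Qed.
End PolynomialMap.

Section BoundaryMinors.
Variable n : nat.

Lemma copositive_of_closure (B : 'M[C]_n) : real_sym B ->
  in_closure (@copositive C n) B -> forall x, nonneg x -> 0 <= qform B x.
Proof.
move=> [_ /mxOverP BR] Bcl x x_ge0.
set T := vsum x ^+ 2.
have T_ge0 : 0 <= T by rewrite exprn_ge0 ?vsum_ge0.
apply/ler_addgt0Pr => e e_gt0.
have e'_gt0 : 0 < e / (T + 1) by rewrite divr_gt0 // ltr_wpDl.
have [B' [[_ /mxOverP B'R] [B'cop B'close]]] := Bcl _ e'_gt0.
have /andP[_ hi] := qform_perturb BR B'R x_ge0 B'close.
apply: le_trans (le_trans _ hi) _.
  by rewrite -qform_mxE; apply: B'cop => i; rewrite mxE.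
by rewrite lerD2l mulrAC ler_pdivrMr ?ltr_wpDl // ler_pM2l // lerDl.
Qed.

Lemma boundary_minors_prod_eq0 (B : 'M[C]_n) : copos_boundary B ->
  \prod_(I : {set 'I_n} | I != set0) \det (principal I B) = 0.
Proof.
move=> [[Bsym BR] [Bcl Bncl]]; apply/eqP; apply: contraT => prod_neq0.
have BmxR : B \is a realmx by apply/mxOverP.
have B_minors S : S != set0 -> \det (principal S B) != 0.
  by move=> S0; apply: contra prod_neq0 => /eqP dS; rewrite (bigD1 S) //= dS mul0r.
have B_copos := copositive_of_closure (conj Bsym BR) Bcl.
have [d d_gt0 Bd] := uniform_copositive BmxR Bsym B_copos B_minors.
have [B' [[_ /mxOverP B'R] [B'ncop B'close]]] := Bncl d d_gt0.
exfalso; apply: B'ncop => x x_ge0; rewrite qform_colE.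
have /andP[lo _] := qform_perturb BmxR B'R x_ge0 B'close.
by apply: le_trans lo; rewrite subr_ge0 Bd.
Qed.

Lemma zariski_boundary_minors (A : 'M[C]_n) :
  zariski_closure (@copos_boundary C n) A ->
  A^T = A /\ \prod_(I : {set 'I_n} | I != set0) \det (principal I A) = 0.
Proof.
case=> Asym Avan; split => //.
have [p pE] := polynomial_map_minors n.
by rewrite -pE; apply: Avan => B BB; rewrite pE boundary_minors_prod_eq0.
Qed.
End BoundaryMinors.

Section Parametrization.
Variables (n : nat) (I : {set 'I_n}) (i0 : 'I_n).
(* Coordinate inl (l, m), l <= m, is the entry Q_lm of the symmetric matrix
   sym_param; inr l, l in I :\ i0, is the entry v_l of null_param, whose
   i0 entry is 1 and whose entries off I vanish.  Other coordinates are unused. *)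
Local Notation coord := ('I_n * 'I_n + 'I_n)%type.

Section Construction.
Variables (R : comNzRingType) (x : {ffun coord -> R}).

Definition sym_param : 'M[R]_n :=
  \matrix_(l, m) x (inl (if (l <= m)%N then (l, m) else (m, l))).

Definition null_param : 'cV[R]_n :=
  \col_l (if l == i0 then 1 else if l \in I then x (inr l) else 0).

Definition shear_param : 'M[R]_n := 1%:M - null_param *m delta_mx 0 i0.

Definition boundary_param : 'M[R]_n :=
  \matrix_(l, m) if (l \in I) && (m \in I)
                 then (shear_param^T *m sym_param *m shear_param) l m
                 else sym_param l m.

Lemma boundary_paramE l m :
  boundary_param l m = if (l \in I) && (m \in I)
                       then (shear_param^T *m sym_param *m shear_param) l m
                       else sym_param l m.
Proof. by rewrite mxE. Qed.

Lemma tr_sym_param : sym_param^T = sym_param.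
Proof.
apply/matrixP => l m; rewrite !mxE; case: (leqP l m) => lm; case: (leqP m l) => ml //.
- by congr (x (inl (_, _))); apply/val_inj/eqP; rewrite eqn_leq lm ml.
- by have := ltn_trans lm ml; rewrite ltnn.
Qed.

Lemma tr_boundary_param : boundary_param^T = boundary_param.
Proof.
have trKQK : (shear_param^T *m sym_param *m shear_param)^T
           = shear_param^T *m sym_param *m shear_param.
  by rewrite !trmx_mul trmxK tr_sym_param mulmxA.
apply/matrixP => l m.
rewrite mxE !boundary_paramE andbC; case: ifP => _.
  by rewrite -[in RHS]trKQK [RHS]mxE.
by rewrite -[in RHS]tr_sym_param [RHS]mxE.
Qed.
End Construction.

Lemma map_boundary_param (R S : comNzRingType) (f : {rmorphism R -> S})
    (x : {ffun coord -> R}) :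
  map_mx f (boundary_param x) = boundary_param [ffun a => f (x a)].
Proof.
have fQ : map_mx f (sym_param x) = sym_param [ffun a => f (x a)].
  by apply/matrixP => l m; rewrite !mxE ffunE.
have fv : map_mx f (null_param x) = null_param [ffun a => f (x a)].
  apply/matrixP => l j; rewrite !mxE ffunE.
  by case: eqP => _; [rewrite rmorph1 | case: ifP => _; rewrite ?rmorph0].
have fK : map_mx f (shear_param x) = shear_param [ffun a => f (x a)].
  by rewrite /shear_param map_mxB map_mx1 map_mxM fv map_delta_mx.
apply/matrixP => l m; rewrite mxE !boundary_paramE; case: ifP => _.
  transitivity (map_mx f ((shear_param x)^T *m sym_param x *m shear_param x) l m).
    by rewrite [RHS]mxE.
  by rewrite !map_mxM -map_trmx fK fQ.
by rewrite -fQ [RHS]mxE.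
Qed.

(* Diagonal entries at least n and off-diagonal ones in (0, 1] make sym_param
   diagonally dominant; every coordinate still ranges over an infinite set. *)
Definition grid (a : coord) (k : nat) : C :=
  match a with
  | inl (l, m) => if l == m then (n + k)%:R else k.+1%:R^-1
  | inr _ => k.+1%:R
  end.

Lemma grid_inj a : injective (grid a).
Proof.
case: a => [[l m]|l] k1 k2 /=.
- case: eqP => _; first by move/eqP; rewrite eqr_nat eqn_add2l => /eqP.
  by move/invr_inj/eqP; rewrite eqr_nat eqSS => /eqP.
- by move/eqP; rewrite eqr_nat eqSS => /eqP.
Qed.

Lemma grid_ge0 a k : 0 <= grid a k.
Proof. by case: a => [[l m]|l] /=; [case: eqP => _; rewrite ?invr_ge0 ler0n|]. Qed.

Section OnGrid.
Hypothesis i0I : i0 \in I.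

Section GridPoint.
Variable x : {ffun coord -> C}.
Hypothesis x_grid : forall a, exists k, x a = grid a k.

Lemma grid_point_ge0 a : 0 <= x a.
Proof. by have [k ->] := x_grid a; apply: grid_ge0. Qed.

Lemma sym_param_ge0 l m : 0 <= sym_param x l m.
Proof. by rewrite mxE grid_point_ge0. Qed.

Lemma sym_param_diag l : n%:R <= sym_param x l l.
Proof.
rewrite mxE leqnn; have [k ->] := x_grid (inl (l, l)).
by rewrite /= eqxx ler_nat leq_addr.
Qed.

Lemma sym_param_offdiag l m : l != m -> sym_param x l m <= 1.
Proof.
move=> lm; rewrite mxE; case: leqP => _.
- have [k ->] := x_grid (inl (l, m)); rewrite /= (negbTE lm).
  by rewrite invf_le1 ?ltr0Sn // ler1n.
- have [k ->] := x_grid (inl (m, l)); rewrite /= eq_sym (negbTE lm).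
  by rewrite invf_le1 ?ltr0Sn // ler1n.
Qed.

Lemma null_param_ge0 l : 0 <= null_param x l 0.
Proof. by rewrite mxE; case: eqP => _ //; case: ifP => _ //; apply: grid_point_ge0. Qed.

Lemma realmx_sym_param : sym_param x \is a realmx.
Proof. by apply/mxOverP => l m; rewrite ger0_real ?sym_param_ge0. Qed.

Lemma realmx_shear_param : shear_param x \is a realmx.
Proof.
rewrite /shear_param realmxB ?mxOver_scalar ?rpred0 ?rpred1 // mxOverM //;
  apply/mxOverP => i j.
  by rewrite ger0_real // (ord1 j) null_param_ge0.
by rewrite mxE rpred_nat.
Qed.

Lemma realmx_boundary_param : boundary_param x \is a realmx.
Proof.
have KQKR : (shear_param x)^T *m sym_param x *m shear_param x \is a realmx.
  by rewrite !mxOverM ?realmx_trmx ?realmx_shear_param ?realmx_sym_param.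
apply/mxOverP => l m; rewrite boundary_paramE.
by case: ifP => _; [exact: (mxOverP KQKR) | exact: (mxOverP realmx_sym_param)].
Qed.

Lemma boundary_param_copos y : nonneg y -> 0 <= qform (boundary_param x) y.
Proof.
move=> y_ge0.
pose yI l := if l \in I then y l else 0.
(* outside I x I the entries are those of sym_param, hence nonnegative *)
have le_yI : qform ((shear_param x)^T *m sym_param x *m shear_param x) yI
             <= qform (boundary_param x) y.
  rewrite /qform /bform; apply: ler_sum => l _; apply: ler_sum => m _.
  rewrite /yI boundary_paramE.
  case: (boolP (l \in I)) => lI; case: (boolP (m \in I)) => mI //=;
    by rewrite ?mul0r ?mulr0 ?mulr_ge0 ?sym_param_ge0 ?y_ge0.
apply: le_trans le_yI; rewrite qform_congruence; apply: qform_ge0_dominant.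
- exact: sym_param_diag.
- exact: sym_param_ge0.
- exact: sym_param_offdiag.
- have yIR : \col_l yI l \is a realmx.
    by apply/mxOverP => i j; rewrite mxE /yI; case: ifP => _; rewrite ?rpred0 ?ger0_real.
  by move=> a; apply: (mxOverP (mxOverM realmx_shear_param yIR)).
Qed.

Lemma shear_null_param : shear_param x *m null_param x = 0.
Proof.
rewrite /shear_param mulmxBl mul1mx -mulmxA -rowE.
have -> : row i0 (null_param x) = 1%:M.
  by apply/matrixP => i j; rewrite (ord1 i) (ord1 j) !mxE !eqxx.
by rewrite mulmx1 subrr.
Qed.

Lemma qform_null_param : qform (boundary_param x) (fun l => null_param x l 0) = 0.
Proof.
have vI l : l \notin I -> null_param x l 0 = 0.
  by move=> lI; rewrite mxE; case: eqP => [e|_]; [rewrite e i0I in lI | rewrite (negbTE lI)].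
transitivity (qform ((shear_param x)^T *m sym_param x *m shear_param x)
                    (fun l => null_param x l 0)).
  rewrite /qform /bform; apply: eq_bigr => l _; apply: eq_bigr => m _.
  rewrite boundary_paramE.
  case: (boolP (l \in I)) => lI; case: (boolP (m \in I)) => mI //=.
  - by rewrite (vI m mI) !mulr0.
  - by rewrite (vI l lI) !mul0r.
  - by rewrite (vI l lI) !mul0r.
rewrite qform_congruence; apply: qform_eq0 => a.
have -> : \col_l null_param x l 0 = null_param x.
  by apply/matrixP => i j; rewrite (ord1 j) mxE.
by rewrite shear_null_param mxE.
Qed.

Lemma boundary_param_boundary : copos_boundary (boundary_param x).
Proof.
have BR : real_sym (boundary_param x).
  by split; [exact: tr_boundary_param | exact/mxOverP/realmx_boundary_param].
split=> //; split=> e e_gt0.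
  exists (boundary_param x); split=> //; split; last by move=> i j; rewrite subrr normr0.
  by move=> y y_ge0; rewrite qform_colE; apply: boundary_param_copos.
have c_gt0 : 0 < e / 2 by rewrite divr_gt0.
exists (boundary_param x - (e / 2)%:M); split; [split|split].
- by rewrite linearB /= tr_scalar_mx tr_boundary_param.
- apply/mxOverP; rewrite realmxB ?realmx_boundary_param // mxOver_scalar ?rpred0 //.
  exact: gtr0_real.
- move=> cop.
  have := cop (null_param x) null_param_ge0.
  rewrite qform_colE qform_subI qform_null_param sub0r oppr_ge0 pmulr_rle0 // => le0.
  have v1 : 1 <= \sum_l null_param x l 0 ^+ 2.
    rewrite (bigD1 i0) //= [null_param x i0 0]mxE eqxx expr1n lerDl.
    by apply: sumr_ge0 => i _; rewrite exprn_ge0 ?null_param_ge0.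
  by have := le_trans v1 le0; rewrite ler10.
- move=> i j; rewrite mxE.
  have -> : boundary_param x i j + (- (e / 2)%:M) i j - boundary_param x i j
            = - (e / 2)%:M i j by rewrite [X in _ + X - _]mxE addrAC subrr add0r.
  rewrite normrN mxE; case: eqP => _; first rewrite mulr1n gtr0_norm //.
    by rewrite ltr_pdivrMr // ltr_pMr // ltr1n.
  by rewrite mulr0n normr0.
Qed.
End GridPoint.

Lemma boundary_param_zariski (p : mpoly C n) :
  (forall B, copos_boundary B -> meval p B = 0) ->
  forall x, meval p (boundary_param x) = 0.
Proof.
move=> pvan.
apply: (eq0_on_grid (F := fun x => meval p (boundary_param x)) (@grid_inj)).
- move=> x a; exists (meval (mpoly_polyC p)
                     (boundary_param [ffun b => if b == a then 'X else (x b)%:P])) => t.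
  rewrite horner_meval map_boundary_param; congr (meval p (boundary_param _)).
  apply/ffunP => b; rewrite !ffunE; case: eqP => _.
    exact: (esym (hornerX t)).
  exact: (esym (hornerC _ t)).
- by move=> x x_grid; apply/pvan/boundary_param_boundary.
Qed.
End OnGrid.

Lemma boundary_param_kernel (A : 'M[C]_n) (v : 'I_n -> C) :
  A^T = A -> v i0 = 1 -> supp I v -> (forall j, j \in I -> \sum_l A j l * v l = 0) ->
  boundary_param [ffun a => match a with inl (l, m) => A l m | inr l => v l end] = A.
Proof.
move=> Asym vi0 vI Av.
set x := [ffun a => _].
have QA : sym_param x = A.
  apply/matrixP => l m; rewrite mxE ffunE.
  by case: leqP => _ //; apply: sym_entry.
have vE : null_param x = \col_l v l.
  apply/matrixP => l j; rewrite !mxE ffunE; case: eqP => [->|_]; first by rewrite vi0.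
  by case: ifP => lI //; rewrite vI // lI.
set e : 'rV[C]_n := delta_mx 0 i0.
set V : 'cV[C]_n := \col_l v l.
set W := A *m V.
have WI j : j \in I -> W j 0 = 0.
  by move=> jI; rewrite mxE -[RHS](Av j jI); apply: eq_bigr => k _; rewrite mxE.
have VW : V^T *m W = 0.
  apply/matrixP => i j; rewrite (ord1 i) (ord1 j) [LHS]mxE [RHS]mxE big1 // => k _.
  have [kI|kI] := boolP (k \in I); first by rewrite WI // mulr0.
  by rewrite mxE [V _ _]mxE vI // mul0r.
(* W = A V vanishes on I, so the congruence leaves the block I x I of A unchanged *)
have KAK : (shear_param x)^T *m A *m shear_param x = A - W *m e - e^T *m W^T.
  have trK : (shear_param x)^T = 1%:M - e^T *m V^T.
    by rewrite /shear_param vE linearB /= trmx1 trmx_mul.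
  have VA : V^T *m A = W^T by rewrite /W trmx_mul Asym.
  have WV : W^T *m V = 0 by rewrite -[V]trmxK -trmx_mul VW trmx0.
  rewrite trK /shear_param vE -/V -/e mulmxBl mul1mx !mulmxBr !mulmx1.
  rewrite -[e^T *m V^T *m A]mulmxA VA !mulmxA mulmxBl -/W.
  by rewrite -[e^T *m W^T *m V]mulmxA WV mulmx0 subr0 addrAC.
apply/matrixP => l m; rewrite boundary_paramE QA; case: ifP => [/andP[lI mI]|//].
have subE (P R : 'M[C]_n) : (P - R) l m = P l m - R l m by rewrite !mxE.
have We : (W *m e) l m = 0 by rewrite mxE big_ord1 WI // mul0r.
have eW : (e^T *m W^T) l m = 0 by rewrite mxE big_ord1 [W^T _ _]mxE WI // mulr0.
by rewrite KAK !subE We eW !subr0.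
Qed.
End Parametrization.

Lemma principal_singular_kernel n (A : 'M[C]_n) (I : {set 'I_n}) :
  A^T = A -> \det (principal I A) = 0 ->
  exists i0, exists v : 'I_n -> C,
    [/\ i0 \in I, v i0 = 1, supp I v & forall j, j \in I -> \sum_l A j l * v l = 0].
Proof.
move=> Asym /eqP/det0P[r r_neq0 rM].
have [k rk] : exists k, r 0 k != 0.
  case: (pickP (fun k => r 0 k != 0)) => [k rk|r0]; first by exists k.
  case/eqP: r_neq0; apply/matrixP => i k; rewrite (ord1 i) mxE.
  exact/eqP/negbFE/r0.
pose u := lift_vec (fun k => r 0 k).
have uk : u (enum_val k) = r 0 k by rewrite /u lift_vec_val.
exists (enum_val k), (fun l => (u (enum_val k))^-1 * u l); split.
- exact: enum_valP.
- by rewrite mulVf // uk.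
- by move=> l lI; rewrite /u (lift_vec_out _ lI) mulr0.
- move=> j jI.
  have Au : \sum_l A j l * u l = 0.
    rewrite /u principal_mul_lift.
    transitivity ((r *m principal I A) 0 (enum_rank_in jI j)); last by rewrite rM mxE.
    by rewrite [RHS]mxE; apply: eq_bigr => i _; rewrite !mxE mulrC (sym_entry Asym).
  transitivity ((u (enum_val k))^-1 * \sum_l A j l * u l); last by rewrite Au mulr0.
  by rewrite mulr_sumr; apply: eq_bigr => l _; ring.
Qed.

Lemma minors_prod_zariski n (A : 'M[C]_n) : A^T = A ->
  \prod_(I : {set 'I_n} | I != set0) \det (principal I A) = 0 ->
  zariski_closure (@copos_boundary C n) A.
Proof.
move=> Asym /eqP; rewrite prodf_seq_eq0 => /hasP[I _ /andP[_ /eqP detI]].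
have [i0 [v [i0I vi0 vI Av]]] := principal_singular_kernel Asym detI.
split=> // p pvan.
by rewrite -(boundary_param_kernel Asym vi0 vI Av); apply: boundary_param_zariski.
Qed.
End CopositiveBoundary.

Unset Implicit Arguments.

Theorem mainTheorem16 (C : numClosedFieldType) (n : nat) (hn : (0 < n)%N)
  (A : 'M[C]_n) :
  zariski_closure (@copos_boundary C n) A <->
  (A^T = A /\
   \prod_(I : {set 'I_n} | I != set0) \det (principal I A) = 0).
Proof.
split; first exact: zariski_boundary_minors.
by case; apply: minors_prod_zariski.
Qed.
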